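(* Let $\Sigma$ be the integral $\mathbb Q$-affine polyhedral complex in $\mathbb R^{V_f''\cup V'_\infty}$ described below, with recession fan $\Upsilon$. There exists an integral $\mathbb Q$-affine polyhedral complex $\widehat\Sigma$ with support $\mathbb R^{V_f''\cup V'_\infty}$ containing $\Sigma$ as a subcomplex, whose recession fan $\widehat\Upsilon$ is a complete fan in $\mathbb R^{V_f''\cup V'_\infty}$ containing $\Upsilon$; moreover $\widehat\Sigma$ can be chosen convex, with convex recession fan $\widehat\Upsilon$.
   Context: $\Sigma$ is a finite integral $\mathbb Q$-affine polyhedral complex in $\mathbb R^{V_f''\cup V'_\infty}$ ($V_f''$, $V'_\infty$ finite sets) which is a subcomplex of a product $P\times\mathbb R^{V'_\infty}_{\ge0}$, where $P$ is the simplex in $\mathbb R^{V_f''}$ with vertices $\frac1{n_{\mathfrak p}}e_{\mathfrak p}$, $\mathfrak p\in V_f''$, $n_{\mathfrak p}$ positive integers, and whose cells are of the form (convex hull of some of these vertices) $+$ (cone spanned by vectors $e_{S_1},\dots,e_{S_l}$ for a chain $S_1\subsetneq\cdots\subsetneq S_l$ of nonempty subsets of $V'_\infty$, $e_S$ the indicator vector of $S$). An integral $\mathbb Q$-affine polyhedral complex is a finite collection of polyhedra defined by integral $\mathbb Q$-affine inequalities $\langle m,u\rangle+\gamma\ge0$ ($m$ integral, $\gamma\in\mathbb Q$), closed under faces and intersecting in common faces. The recession fan is the collection of recession cones of the cells. A facewise (integral $\mathbb Q$-)affine function $H$ on a complex $\Sigma$ is convex if for each cell $\sigma$ there is an (integral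 $\mathbb Q$-)affine $L_\sigma$ on the ambient space with $H=L_\sigma$ on $\sigma$ and $H-L_\sigma\ge0$ on $\eta\setminus\sigma$ for every cell $\eta\supseteq\sigma$, strictly convex if these inequalities are strict. A complex (or fan) is convex if it admits a strictly convex facewise integral $\mathbb Q$-affine function (having the same slopes near infinity along parallel rays). *)

From HB Require Import structures.
From mathcomp Require Import all_boot all_order all_algebra.
From mathcomp Require Import boolp classical_sets cardinality reals.
Set Implicit Arguments. Unset Strict Implicit. Unset Printing Implicit Defensive.
Import Order.TTheory GRing.Theory Num.Theory.
Local Open Scope ring_scope.
Local Open Scope classical_set_scope.

Section Polyhedral.
Variables (R : realType) (V : finType).
Local Notation pt := (V -> R).

Definition iqaff (m : V -> int) (g : rat) (u : pt) : R :=
  \sum_(i : V) (m i)%:~R * u i + ratr g.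

Definition iq_poly (P : set pt) : Prop :=
  exists (k : nat) (M : 'I_k -> V -> int) (g : 'I_k -> rat),
    P = [set u | forall j, 0 <= iqaff (M j) (g j) u].

Definition iq_cone (C : set pt) : Prop :=
  exists (k : nat) (M : 'I_k -> V -> int),
    C = [set u | forall j, 0 <= iqaff (M j) 0 u].

(* F is a face of P (possibly empty, possibly P itself) *)
Definition is_face (F P : set pt) : Prop :=
  exists (c : V -> R) (d : R),
    (forall u, P u -> 0 <= \sum_(i : V) c i * u i + d) /\
    F = P `&` [set u | \sum_(i : V) c i * u i + d = 0].

Definition iq_complex (S : set (set pt)) : Prop :=
  [/\ finite_set S,
      (forall s, S s -> iq_poly s /\ s !=set0),
      (forall s F, S s -> is_face F s -> F !=set0 -> S F) &
      (forall s t, S s -> S t -> is_face (s `&` t) s /\ is_face (s `&` t) t)].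

Definition iq_fan (S : set (set pt)) : Prop :=
  iq_complex S /\ (forall s, S s -> iq_cone s).

Definition covers (S : set (set pt)) : Prop :=
  forall u : pt, exists s, S s /\ s u.

Definition shift (x : pt) (t : R) (d : pt) : pt := fun i => x i + t * d i.

Definition rec_cone (s : set pt) : set pt :=
  [set d | forall x t, s x -> 0 <= t -> s (shift x t d)].

Definition rec_fan (S : set (set pt)) : set (set pt) := rec_cone @` S.

Definition same_slopes (S : set (set pt)) (H : pt -> R) : Prop :=
  forall s t x y d (r : R), S s -> S t -> s x -> t y ->
    rec_cone s d -> rec_cone t d -> 0 <= r ->
    H (shift x r d) - H x = H (shift y r d) - H y.

(* convex complex / fan: admits a strictly convex facewise integral
   Q-affine function with the same slopes along parallel rays *)
Definition convex_complex (S : set (set pt)) : Prop :=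
  exists H : pt -> R, same_slopes S H /\
    forall s, S s -> exists (m : V -> int) (g : rat),
      (forall x, s x -> H x = iqaff m g x) /\
      (forall e, S e -> s `<=` e -> forall x, e x -> ~ s x -> iqaff m g x < H x).

End Polyhedral.

Section SigmaCells.
Variables (R : realType) (Vf Vinf : finType).

Definition is_chain (c : seq {set Vinf}) : bool :=
  sorted (fun S1 S2 : {set Vinf} => S1 \proper S2) c && all (fun S => S != @finset.set0 Vinf) c.

(* conv{ (1/n_p) e_p : p in A } + cone{ e_{S_j} } *)
Definition sigma_cell (n : Vf -> nat) (A : {set Vf}) (c : seq {set Vinf})
  : set (Vf + Vinf -> R) :=
  [set u | exists (lam : Vf -> R) (mu : 'I_(size c) -> R),
     [/\ (forall p, 0 <= lam p), (forall p, p \notin A -> lam p = 0),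
         \sum_(p : Vf) lam p = 1 /\ (forall j, 0 <= mu j),
         (forall p, u (inl p) = lam p / (n p)%:R) &
         (forall i, u (inr i) =
            \sum_(j < size c) mu j * (i \in nth (@finset.set0 Vinf) c j)%:R)]].

End SigmaCells.

From HB Require Import structures.
From mathcomp Require Import all_boot all_order all_algebra.
From mathcomp Require Import boolp classical_sets cardinality reals.
From mathcomp Require Import ring lra.
Set Implicit Arguments. Unset Strict Implicit. Unset Printing Implicit Defensive.
Import Order.TTheory GRing.Theory Num.Theory.
Local Open Scope ring_scope.
Local Open Scope classical_set_scope.

(* The cells of Sigma are closed sign cells of the finite arrangement of integral Q-affine
   functions u_p, \sum_p n_p u_p - 1, u_i and u_i - u_j (p in V_f'', i, j in V'_oo):
   membership in conv{e_p / n_p : p in A} + cone{e_{S_1}, ..., e_{S_l}} amounts to fixing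
   the signs of these functions.  For any finite arrangement (l_k), the nonempty closed sign
   cells form a complete complex: faces of cells are cells (a face is cut out by making some
   l_k vanish, as one sees from a relative interior point) and H = \sum_k |l_k| is strictly
   convex on it.  The recession cone of a nonempty cell is the sign cell of the linear parts
   l_k - l_k(0); adding these linear parts to the arrangement makes every cell of the linear
   arrangement a recession cone, so the recession fan is the complete, convex arrangement fan. *)

Section Signs.
Variable R : realFieldType.

Definition sign_coef (o : option bool) : int :=
  match o with Some true => 1 | Some false => -1 | None => 0 end.

(* [Some true], [Some false] and [None] encode the closed conditions [r >= 0], [r <= 0], [r = 0]. *)
Definition has_sign (o : option bool) (r : R) : Prop := (sign_coef o)%:~R * r = `|r|.

Definition sign_of (r : R) : option bool := if r == 0 then None else Some (0 <= r).

Lemma has_signE o (r : R) :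
  has_sign o r <-> match o with Some true => 0 <= r | Some false => r <= 0 | None => r = 0 end.
Proof.
rewrite /has_sign; case: o => [[]|] /=; rewrite ?mul1r ?mulN1r ?mul0r.
- by split=> [->|/ger0_norm ->].
- by split=> [h|/ler0_norm ->]; [rewrite -oppr_ge0 h|].
- by split=> [/esym/normr0_eq0|->]; rewrite ?normr0.
Qed.

Lemma sign_coef_mul_le o (r : R) : (sign_coef o)%:~R * r <= `|r|.
Proof.
case: o => [[]|] /=; rewrite ?mul1r ?mulN1r ?mul0r ?ler_norm //.
by rewrite -normrN ler_norm.
Qed.

Lemma has_sign0 o : has_sign o (0 : R).
Proof. by rewrite /has_sign mulr0 normr0. Qed.

Lemma has_sign_None (r : R) : has_sign None r -> r = 0.
Proof. by move/has_signE. Qed.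

Lemma has_sign_of (r : R) : has_sign (sign_of r) r.
Proof.
rewrite /sign_of; case: eqP => [->|_]; first exact: has_sign0.
by apply/has_signE; case: lerP => // /ltW.
Qed.

Lemma has_sign_ofP o (r : R) : has_sign o r -> r != 0 -> o = sign_of r.
Proof.
move=> /has_signE h nz; rewrite /sign_of (negPf nz).
case: o h => [[]|] h; first by rewrite h.
  by rewrite lt_geF // lt_neqAle nz h.
by move: nz; rewrite h eqxx.
Qed.

Lemma has_sign_Some b (r : R) : 0 <= (sign_coef (Some b))%:~R * r -> has_sign (Some b) r.
Proof. by case: b => h; apply/has_signE; move: h; rewrite /= ?mul1r ?mulN1r ?oppr_ge0. Qed.

Lemma has_signD o (x y : R) : has_sign o x -> has_sign o y -> has_sign o (x + y).
Proof.
move=> hx hy; apply/eqP; rewrite eq_le sign_coef_mul_le /= mulrDr hx hy.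
exact: ler_normD.
Qed.

Lemma has_signZ o (t r : R) : 0 <= t -> has_sign o r -> has_sign o (t * r).
Proof. by move=> t0 hr; rewrite /has_sign mulrCA hr normrM (ger0_norm t0). Qed.

Definition sign_ineq (o : option bool) (b : bool) : int :=
  if b then (if o is Some false then -1 else 1) else (if o is None then -1 else 0).

Lemma has_sign_ineqs o (r : R) : has_sign o r <-> forall b, 0 <= (sign_ineq o b)%:~R * r.
Proof.
rewrite has_signE; case: o => [[]|] /=.
- by split=> [h []|/(_ true)]; rewrite /= ?mul1r ?mul0r.
- by split=> [h []|/(_ true)]; rewrite /= ?mulN1r ?mul0r ?oppr_ge0.
- split=> [-> b|h]; first by rewrite mulr0.
  by apply/eqP; rewrite eq_le -oppr_ge0 -mulN1r (h false) -[r]mul1r (h true).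
Qed.

Lemma sign_ofZ (t r : R) : 0 < t -> sign_of (t * r) = sign_of r.
Proof. by move=> t0; rewrite /sign_of mulf_eq0 gt_eqF // pmulr_rge0. Qed.

Lemma sign_coef_gt0_sign_of o (r : R) : 0 < (sign_coef o)%:~R * r -> sign_of r = o.
Proof.
rewrite /sign_of; case: o => [[]|] /=; rewrite ?mul1r ?mulN1r ?mul0r ?ltxx // => h.
  by rewrite gt_eqF // ltW.
by rewrite lt_eqF ?lt_geF // -oppr_gt0.
Qed.

Lemma sign_of_perturb (I : finType) (p q : I -> R) :
  exists2 e, 0 < e & forall i, p i != 0 -> sign_of (p i + e * q i) = sign_of (p i).
Proof.
pose S := \sum_i `|q i| / `|p i|.
have S0 : 0 <= S by apply: sumr_ge0 => i _; rewrite divr_ge0.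
exists (1 + S)^-1; first by rewrite invr_gt0; lra.
move=> i nz; apply: sign_coef_gt0_sign_of; rewrite mulrDr mulrCA has_sign_of.
set e := (1 + S)^-1; set sq := _ * q i.
have e0 : 0 <= e by rewrite invr_ge0; lra.
have pi0 : 0 < `|p i| by rewrite normr_gt0.
have qS : `|q i| / `|p i| <= S.
  by rewrite /S (bigD1 i) //= lerDl; apply: sumr_ge0 => j _; rewrite divr_ge0.
have small : e * `|q i| < `|p i|.
  rewrite mulrC ltr_pdivrMr ?(lt_le_trans ltr01) ?lerDl // -ltr_pdivrMl //.
  by rewrite mulrC (le_lt_trans qS) // ltrDr.
have : - (e * `|q i|) <= e * sq.
  rewrite -mulrN ler_wpM2l //; have := sign_coef_mul_le (sign_of (p i)) (- q i).
  by rewrite mulrN normrN /sq; lra.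
lra.
Qed.

End Signs.

Section Affine.
Variables (R : realType) (V : finType).
Local Notation pt := (V -> R).

Definition aff (c : V -> R) (d : R) (u : pt) : R := \sum_(i : V) c i * u i + d.

Lemma iqaffE (m : V -> int) (g : rat) (u : pt) :
  iqaff m g u = aff (fun v => (m v)%:~R) (ratr g) u.
Proof. by []. Qed.

Lemma aff_comb2 c d (al be : R) (x y : pt) : al + be = 1 ->
  aff c d (fun v => al * x v + be * y v) = al * aff c d x + be * aff c d y.
Proof.
move=> h; rewrite /aff.
have -> : \sum_i c i * (al * x i + be * y i) =
   al * (\sum_i c i * x i) + be * (\sum_i c i * y i).
  by rewrite !mulr_sumr -big_split /=; apply: eq_bigr => i _; ring.
by rewrite -[d in LHS]mul1r -h; ring.
Qed.

Lemma aff_shift c d (x : pt) t (e : pt) :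
  aff c d (shift x t e) = aff c d x + t * aff c 0 e.
Proof.
rewrite /aff /shift addr0 mulr_sumr.
have -> : \sum_i c i * (x i + t * e i) = \sum_i c i * x i + \sum_i t * (c i * e i).
  by rewrite -big_split /=; apply: eq_bigr => i _; ring.
ring.
Qed.

Lemma aff_avg (K : finType) c d (pts : K -> pt) : (0 < #|K|)%N ->
  aff c d (fun v => #|K|%:R^-1 * \sum_k pts k v) = #|K|%:R^-1 * \sum_k aff c d (pts k).
Proof.
move=> hK; rewrite /aff big_split /= mulrDr.
have hN : (#|K|%:R : R) != 0 by rewrite pnatr_eq0 -lt0n.
congr (_ + _).
  rewrite exchange_big mulr_sumr; apply: eq_bigr => v _; rewrite -mulr_sumr; ring.
by rewrite sumr_const -mulr_natr; field.
Qed.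

Lemma iqaff_scale (z : int) (m : V -> int) g (u : pt) :
  iqaff (fun v => z * m v) (z%:~R * g) u = z%:~R * iqaff m g u.
Proof.
rewrite /iqaff mulrDr mulr_sumr; congr (_ + _).
  by apply: eq_bigr => v _; rewrite intrM mulrA.
by rewrite rmorphM /= ratr_int.
Qed.

End Affine.

Section Arrangement.
Variables (R : realType) (V I : finType) (lam : I -> V -> int) (a : I -> rat).
Local Notation pt := (V -> R).

Definition ell i (u : pt) : R := iqaff (lam i) (a i) u.

Definition sign_cell (s : I -> option bool) : set pt :=
  [set u | forall i, has_sign (s i) (ell i u)].

Definition sign_cells : set (set pt) := [set C | exists s, C = sign_cell s /\ C !=set0].

Definition sign_vec (x : pt) (i : I) : option bool := sign_of (ell i x).

Lemma sign_cell_sign_vec x : sign_cell (sign_vec x) x.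
Proof. by move=> i; exact: has_sign_of. Qed.

Lemma ell_comb2 i (al be : R) (x y : pt) : al + be = 1 ->
  ell i (fun v => al * x v + be * y v) = al * ell i x + be * ell i y.
Proof. by move=> h; rewrite /ell iqaffE aff_comb2. Qed.

Lemma ell_avg (K : finType) i (pts : K -> pt) : (0 < #|K|)%N ->
  ell i (fun v => #|K|%:R^-1 * \sum_k pts k v) = #|K|%:R^-1 * \sum_k ell i (pts k).
Proof. by move=> hK; rewrite /ell iqaffE aff_avg. Qed.

Lemma ell_lincomb (w : I -> int) (u : pt) :
  iqaff (fun v => \sum_i w i * lam i v) (\sum_i (w i)%:~R * a i) u =
  \sum_i (w i)%:~R * ell i u.
Proof.
rewrite /ell /iqaff.
under [RHS]eq_bigr => i _ do rewrite mulrDr mulr_sumr.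
rewrite big_split /= rmorph_sum; congr (_ + _); last first.
  by apply: eq_bigr => i _; rewrite rmorphM /= ratr_int.
rewrite exchange_big /=; apply: eq_bigr => v _; rewrite rmorph_sum mulr_suml.
by apply: eq_bigr => i _; rewrite rmorphM mulrA.
Qed.

Definition ineq_row s (j : 'I_#|{: I * bool}|) : V -> int :=
  let: (i, b) := enum_val j in fun v => sign_ineq (s i) b * lam i v.

Definition ineq_const s (j : 'I_#|{: I * bool}|) : rat :=
  let: (i, b) := enum_val j in (sign_ineq (s i) b)%:~R * a i.

Lemma sign_cell_ineqs s :
  sign_cell s = [set u | forall j, 0 <= iqaff (ineq_row s j) (ineq_const s j) u].
Proof.
apply/seteqP; split=> u /= h.
  move=> j; rewrite /ineq_row /ineq_const; case: (enum_val j) => i b.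
  by rewrite iqaff_scale; exact/(has_sign_ineqs _ _).1.
move=> i; apply/(has_sign_ineqs _ _).2 => b.
by have := h (enum_rank (i, b)); rewrite /ineq_row /ineq_const enum_rankK iqaff_scale.
Qed.

Lemma sign_cell_iq_poly s : iq_poly (sign_cell s).
Proof. by exists #|{: I * bool}|, (ineq_row s), (ineq_const s); rewrite sign_cell_ineqs. Qed.

Lemma sign_cell_inter_face s t : is_face (sign_cell s `&` sign_cell t) (sign_cell s).
Proof.
pose w i : int := if s i != t i then sign_coef (s i) else 0.
have term_ge0 u i : sign_cell s u -> 0 <= (w i)%:~R * ell i u.
  by move=> hu; rewrite /w; case: ifP => _; [rewrite hu|rewrite mul0r].
exists (fun v => (\sum_i w i * lam i v)%:~R), (ratr (\sum_i (w i)%:~R * a i)).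
have sumE u : \sum_v (\sum_i w i * lam i v)%:~R * u v + ratr (\sum_i (w i)%:~R * a i) =
    \sum_i (w i)%:~R * ell i u by rewrite -ell_lincomb.
split=> [u hu|]; first by rewrite sumE sumr_ge0 // => i _; exact: term_ge0.
apply/seteqP; split=> u /=.
  move=> [hs ht]; split=> //; rewrite sumE big1 // => i _; rewrite /w.
  case: ifP => [/negP hne|]; last by rewrite mul0r.
  have [->|nz] := eqVneq (ell i u) 0; first by rewrite mulr0.
  by case: hne; rewrite (has_sign_ofP (hs i) nz) (has_sign_ofP (ht i) nz).
move=> [hs]; rewrite sumE => /psumr_eq0P h0; split=> // i.
have := h0 (fun j _ => term_ge0 _ j hs) i isT; rewrite /w; case: ifP => [_|/negbFE/eqP <-//].
by rewrite (hs i) => /normr0_eq0 ->; exact: has_sign0.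
Qed.

Definition relint_pt (F : set pt) (x : pt) :=
  F x /\ forall i y, F y -> ell i x = 0 -> ell i y = 0.

(* Averaging one point of [F] per index [i], chosen off [ell i = 0] when possible,
   gives a point where no [ell i] vanishes unless it vanishes on all of [F]. *)
Lemma exists_relint_pt s c d (F := sign_cell s `&` [set u | aff c d u = 0]) :
  F !=set0 -> exists x, relint_pt F x.
Proof.
move=> [x0 Fx0].
have pick i : exists y, F y /\ ((exists y, F y /\ ell i y != 0) -> ell i y != 0).
  case: (pselect (exists y, F y /\ ell i y != 0)) => [[y [Fy nz]]|hn]; first by exists y.
  by exists x0; split=> // h; case: hn.
have [yf hy] := choice pick.
pose pts (k : option I) : pt := if k is Some i then yf i else x0.
have Fpts k : F (pts k) by case: k => [i|] //=; exact: (hy i).1.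
have hN : (0 < #|{: option I}|)%N by rewrite card_option.
pose N : R := #|{: option I}|%:R.
have N0 : 0 < N^-1 by rewrite invr_gt0 ltr0n.
pose x : pt := fun v => N^-1 * \sum_k pts k v.
have sgx i : (sign_coef (s i))%:~R * ell i x = N^-1 * \sum_k `|ell i (pts k)|.
  rewrite ell_avg // mulrCA mulr_sumr; congr (_ * _); apply: eq_bigr => k _.
  by case: (Fpts k) => /(_ i).
have xs : sign_cell s x.
  move=> i; apply/eqP; rewrite eq_le sign_coef_mul_le /= sgx ell_avg // normrM (gtr0_norm N0).
  by rewrite ler_pM2l //; exact: ler_norm_sum.
have Fx : F x.
  split=> //=; rewrite /x aff_avg // big1 ?mulr0 // => k _; by case: (Fpts k).
exists x; split=> // i y Fy x0i; apply/eqP; apply: contraT => nz.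
have /(hy i).2 yi0 : exists y, F y /\ ell i y != 0 by exists y.
move/eqP: x0i; rewrite -normr_eq0 -(xs i) sgx mulf_eq0 gt_eqF //= psumr_eq0 //.
by move=> /allP /(_ (Some i) (mem_index_enum _)); rewrite /= normr_eq0 (negPf yi0).
Qed.

Lemma relint_sub_sign_vec s F x :
  F `<=` sign_cell s -> relint_pt F x -> F `<=` sign_cell (sign_vec x).
Proof.
move=> Fs [Fx x0] y Fy i; rewrite /sign_vec.
have [xi0|nz] := eqVneq (ell i x) 0; first by rewrite xi0 (x0 i y Fy xi0); exact: has_sign0.
by rewrite -(has_sign_ofP (Fs x Fx i) nz); exact: Fs.
Qed.

Lemma sign_vec_sub s x : sign_cell s x -> sign_cell (sign_vec x) `<=` sign_cell s.
Proof.
move=> xs y ys i; have [xi0|nz] := eqVneq (ell i x) 0.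
  by have := ys i; rewrite /sign_vec xi0 /sign_of eqxx => /has_sign_None ->; exact: has_sign0.
by rewrite (has_sign_ofP (xs i) nz); exact: ys.
Qed.

(* [x] lies in the relative interior of the cell [sign_cell (sign_vec x)]. *)
Lemma sign_vec_extend x y : sign_cell (sign_vec x) y ->
  exists2 e, 0 < e & sign_cell (sign_vec x) (fun v => (1 + e) * x v + (- e) * y v).
Proof.
move=> ys; have [e e0 he] := sign_of_perturb (fun i => ell i x) (fun i => ell i x - ell i y).
exists e => // i; rewrite ell_comb2 ?addrK //.
have -> : (1 + e) * ell i x + - e * ell i y = ell i x + e * (ell i x - ell i y) by ring.
have [xi0|nz] := eqVneq (ell i x) 0; last by rewrite /sign_vec -(he i nz); exact: has_sign_of.
have := ys i; rewrite /sign_vec xi0 /sign_of eqxx => /has_sign_None ->.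
by rewrite !subrr mulr0 addr0; exact: has_sign0.
Qed.

Lemma face_sign_cell s F : is_face F (sign_cell s) -> F !=set0 -> exists t, F = sign_cell t.
Proof.
move=> [c [d [hnn ->]]] hne; have [x hx] := exists_relint_pt hne.
have xs : sign_cell s x := hx.1.1.
exists (sign_vec x); apply/seteqP; split.
  by apply: relint_sub_sign_vec hx; exact: subIsetl.
move=> y hy; have ys := sign_vec_sub xs hy; split=> //=.
have [e e0 hz] := sign_vec_extend hy.
have hz0 : 0 <= aff c d (fun v => (1 + e) * x v + - e * y v) := hnn _ (sign_vec_sub xs hz).
have hx0 : aff c d x = 0 := hx.1.2.
have hy0 : 0 <= aff c d y := hnn y ys.
change (aff c d y = 0); move: hz0; rewrite aff_comb2 ?addrK // hx0; nra.
Qed.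

Lemma sign_cells_finite : finite_set sign_cells.
Proof.
apply: (@sub_finite_set _ _ ((fun f : {ffun I -> option bool} => sign_cell f) @` setT)).
  move=> C [s [-> _]]; exists [ffun i => s i] => //.
  by congr sign_cell; apply: funext => i; rewrite ffunE.
by apply: finite_image; exact: finite_finset.
Qed.

Lemma sign_cells_complex : iq_complex sign_cells.
Proof.
split.
- exact: sign_cells_finite.
- by move=> C [s [-> ne]]; split=> //; exact: sign_cell_iq_poly.
- move=> C F [s [-> _]] hf ne; have [t ht] := face_sign_cell hf ne.
  by exists t.
- move=> C D [s [-> _]] [t [-> _]]; split; first exact: sign_cell_inter_face.
  by rewrite setIC; exact: sign_cell_inter_face.
Qed.

Lemma sign_cells_cover : covers sign_cells.
Proof.
move=> u; exists (sign_cell (sign_vec u)); split; last exact: sign_cell_sign_vec.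
by exists (sign_vec u); split=> //; exists u; exact: sign_cell_sign_vec.
Qed.

End Arrangement.

Section Recession.
Variables (R : realType) (V I : finType) (lam : I -> V -> int) (a : I -> rat).
Local Notation pt := (V -> R).
Local Notation ell0 i u := (ell lam (fun=> 0) i u).
Local Notation cell := (@sign_cell R V I lam a).
Local Notation cell0 := (@sign_cell R V I lam (fun=> 0)).

Lemma ell_shift i (x : pt) t d : ell lam a i (shift x t d) = ell lam a i x + t * ell0 i d.
Proof. by rewrite /ell !iqaffE aff_shift rmorph0. Qed.

Lemma ell_lin i (u : pt) : ell lam a i u = ell0 i u + ratr (a i).
Proof. by rewrite /ell /iqaff rmorph0 addr0. Qed.

Lemma sign_cell0_iq_cone s : iq_cone (cell0 s).
Proof.
exists #|{: I * bool}|, (ineq_row lam s); rewrite sign_cell_ineqs.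
have -> // : ineq_const (fun=> 0) s = fun=> 0.
by apply: funext => j; rewrite /ineq_const; case: enum_val => i b; rewrite mulr0.
Qed.

Lemma ell_scale i t (u : pt) :
  ell lam a i (fun v => t * u v) = t * ell0 i u + ratr (a i).
Proof.
rewrite /ell /iqaff rmorph0 addr0 mulr_sumr; congr (_ + _).
by apply: eq_bigr => v _; rewrite mulrCA.
Qed.

Lemma sign_cell0_zero s : cell0 s (fun=> 0).
Proof.
move=> i; rewrite /ell /iqaff rmorph0 addr0 big1 ?mulr0; first exact: has_sign0.
by move=> v _; rewrite mulr0.
Qed.

Lemma exists_relint_pt0 s : exists x, relint_pt lam (fun=> 0) (cell0 s) x.
Proof.
have aff0 : [set u : pt | aff (fun=> 0) 0 u = 0] = setT.
  apply/seteqP; split=> [//|u _ /=].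
  by rewrite /aff big1 ?addr0 // => v _; rewrite mul0r.
have := @exists_relint_pt R V I lam (fun=> 0) s (fun=> 0) 0.
by rewrite aff0 setIT; apply; exists (fun=> 0); exact: sign_cell0_zero.
Qed.

Lemma rec_cone_sign_cell s x : cell s x -> rec_cone (cell s) = cell0 s.
Proof.
move=> xs; apply/seteqP; split=> d; last first.
  by move=> hd y t ys t0 i; rewrite ell_shift; apply: has_signD (ys i) (has_signZ t0 (hd i)).
move=> hd i; have := hd x 1 xs ler01 i; rewrite ell_shift mul1r.
case hs: (s i) (xs i) => [b|] hx hx1; last first.
  by move: hx1; rewrite (has_sign_None hx) add0r => /has_sign_None ->; exact: has_sign0.
apply: has_sign_Some; rewrite leNgt; apply/negP => hneg.
rewrite /has_sign in hx; set A := _ * ell lam a i x in hx; set B := _ * ell0 i d in hneg.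
have A0 : 0 <= A by rewrite hx.
(* Walking far enough along [d] would push [ell i] across zero. *)
pose t := A / - B + 1.
have t0 : 0 <= t by rewrite /t addr_ge0 // divr_ge0 // oppr_ge0 ltW.
have := hd x t xs t0 i; rewrite ell_shift hs /has_sign => hxt.
have : (sign_coef (Some b))%:~R * (ell lam a i x + t * ell0 i d) = B.
  by rewrite mulrDr mulrCA -/A -/B /t; field; rewrite ?oppr_eq0 lt_eqF.
by rewrite hxt => hB; move: hneg; rewrite -hB ltNge normr_ge0.
Qed.

Definition ell_abs_sum (u : pt) : R := \sum_i `|ell lam a i u|.

Lemma ell_abs_sum_shift s x d r : cell s x -> rec_cone (cell s) d ->
  0 <= r -> ell_abs_sum (shift x r d) - ell_abs_sum x = r * \sum_i `|ell0 i d|.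
Proof.
move=> xs; rewrite (rec_cone_sign_cell xs) => hd r0.
rewrite /ell_abs_sum mulr_sumr -sumrB; apply: eq_bigr => i _.
rewrite ell_shift -(has_signD (xs i) (has_signZ r0 (hd i))) -(xs i) -(hd i); ring.
Qed.

(* On [sign_cell s] the sum agrees with [\sum_i sign_coef (s i) * ell i], and exceeds it
   elsewhere. *)
Lemma sign_cells_convex : convex_complex (@sign_cells R V I lam a).
Proof.
exists ell_abs_sum; split.
  move=> C D x y d r [s [-> _]] [t [-> _]] xs yt hs ht r0.
  by rewrite (ell_abs_sum_shift xs hs r0) (ell_abs_sum_shift yt ht r0).
move=> C [s [-> _]].
exists (fun v => \sum_i sign_coef (s i) * lam i v), (\sum_i (sign_coef (s i))%:~R * a i).
split=> [x xs|E _ _ x _ nxs]; rewrite ell_lincomb /ell_abs_sum.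
  by apply: eq_bigr => i _; rewrite xs.
have le : \sum_i (sign_coef (s i))%:~R * ell lam a i x <= \sum_i `|ell lam a i x|.
  by apply: ler_sum => i _; exact: sign_coef_mul_le.
rewrite lt_neqAle le andbT; apply/eqP => heq; apply: nxs => i.
pose gap j := `|ell lam a j x| - (sign_coef (s j))%:~R * ell lam a j x.
have gap_ge0 j : true -> 0 <= gap j by rewrite subr_ge0 sign_coef_mul_le.
have /(psumr_eq0P gap_ge0)/(_ i isT)/eqP : \sum_j gap j = 0 by rewrite sumrB heq subrr.
by rewrite subr_eq0 => /eqP.
Qed.

End Recession.

Section Doubling.
Variables (R : realType) (V J : finType) (lam : J -> V -> int) (a : J -> rat).
Local Notation pt := (V -> R).

(* Adjoining the linear parts of the [ell j] turns every cell of the linear arrangement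
   into a recession cone. *)
Definition dbl_idx (k : J + J) : J := match k with inl j | inr j => j end.
Definition dbl_lam (k : J + J) : V -> int := lam (dbl_idx k).
Definition dbl_const (k : J + J) : rat := if k is inl j then a j else 0.
Definition dbl_sign (s s' : J -> option bool) (k : J + J) : option bool :=
  match k with inl j => s j | inr j => s' j end.

Local Notation ell0 j u := (ell lam (fun=> 0) j u).
Local Notation dcell := (@sign_cell R V _ dbl_lam dbl_const).
Local Notation dcell0 := (@sign_cell R V _ dbl_lam (fun=> 0)).

Lemma ell_dbl0 k (u : pt) : ell dbl_lam (fun=> 0) k u = ell0 (dbl_idx k) u.
Proof. by []. Qed.

Lemma sign_cell_dbl s s' :
  dcell (dbl_sign s s') = sign_cell lam a s `&` sign_cell lam (fun=> 0) s'.
Proof.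
apply/seteqP; split=> u; first by move=> h; split=> j; [exact: h (inl j)|exact: h (inr j)].
by move=> [hs hs'] [j|j]; [exact: hs|exact: hs'].
Qed.

Lemma rec_fan_dbl :
  rec_fan (@sign_cells R V _ dbl_lam dbl_const) = @sign_cells R V _ dbl_lam (fun=> 0).
Proof.
apply/seteqP; split=> C.
  move=> [D [s [-> [x xs]]] <-]; exists s; rewrite (rec_cone_sign_cell xs).
  by split=> //; exists (fun=> 0); exact: sign_cell0_zero.
move=> [rho [-> _]].
have [d0 [d0rho d0rel]] := @exists_relint_pt0 R V _ dbl_lam rho.
pose p j := ell0 j d0.
(* Far out along [d0] the constants [a j] only matter where [p j] vanishes. *)
have [e e0 he] := sign_of_perturb p (fun j => ratr (a j)).
pose x : pt := fun v => e^-1 * d0 v.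
pose s := sign_vec dbl_lam dbl_const x.
have e'0 : 0 < e^-1 by rewrite invr_gt0.
have s_rho k : p (dbl_idx k) != 0 -> s k = rho k.
  move=> nz; rewrite (has_sign_ofP (d0rho k) nz) /s /sign_vec ell_scale ell_dbl0 -/(p _).
  case: k nz => j nz /=; last by rewrite rmorph0 addr0 sign_ofZ.
  by rewrite -[X in _ + X](mulKf (lt0r_neq0 e0)) -mulrDr sign_ofZ // he.
have s_vanish j u : p j = 0 -> dcell0 s u -> ell0 j u = 0.
  move=> pj0 /(_ (inr j)); rewrite /s /sign_vec ell_scale ell_dbl0 -/(p _) pj0 mulr0 /=.
  by rewrite rmorph0 addr0 /sign_of eqxx => /has_sign_None.
exists (dcell s); first by exists s; split=> //; exists x; exact: sign_cell_sign_vec.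
rewrite (rec_cone_sign_cell (sign_cell_sign_vec _ _ x)).
apply/seteqP; split=> u hu k; have [pk0|nz] := eqVneq (p (dbl_idx k)) 0.
- by rewrite ell_dbl0 (s_vanish _ _ pk0 hu); exact: has_sign0.
- by rewrite -(s_rho k nz); exact: hu.
- by rewrite (d0rel k u hu pk0); exact: has_sign0.
- by rewrite -/s (s_rho k nz); exact: hu.
Qed.

End Doubling.

Section Chain.
Variables (T : finType) (c : seq {set T}).
Hypothesis chain_c : is_chain c.

Definition chain_idx (i : T) : nat := find (fun S : {set T} => i \in S) c.

Lemma chain_idx_le i : (chain_idx i <= size c)%N.
Proof. exact: find_size. Qed.

Lemma chain_proper k l : (k < l)%N -> (l < size c)%N ->
  nth finset.set0 c k \proper nth finset.set0 c l.
Proof.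
move=> kl ls; have /andP [sorted_c _] := chain_c.
have tr : transitive (fun S1 S2 : {set T} => S1 \proper S2) by move=> ? ? ?; exact: proper_trans.
apply: (sorted_ltn_nth tr finset.set0 sorted_c) => //; exact: ltn_trans kl ls.
Qed.

Lemma mem_nth_chain k i : (k < size c)%N -> (i \in nth finset.set0 c k) = (chain_idx i <= k)%N.
Proof.
move=> ks; apply/idP/idP => h.
  rewrite leqNgt; apply/negP => lt.
  by have := before_find finset.set0 lt; rewrite h.
have hin : i \in nth finset.set0 c (chain_idx i).
  apply: (nth_find finset.set0 (a := fun S : {set T} => i \in S)).
  by rewrite has_find (leq_ltn_trans h).
move: h; rewrite leq_eqVlt => /orP [/eqP <- //|lt].
by have /proper_sub /fintype.subsetP := chain_proper lt ks; exact.
Qed.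

Lemma chain_idx_onto k : (k < size c)%N -> exists i, chain_idx i = k.
Proof.
move=> ks; have /andP [_ /(all_nthP finset.set0) ne] := chain_c.
have {ne}ne := ne k ks; case: k ks ne => [|k] ks ne.
  by have [i hi] := finset.set0Pn _ ne; exists i; apply/eqP; rewrite -leqn0 -mem_nth_chain.
have /fintype.properP [_ [i hi hni]] := chain_proper (ltnSn k) ks.
exists i; apply/eqP; rewrite eqn_leq -mem_nth_chain // hi /=.
by rewrite ltnNge -mem_nth_chain ?hni // (ltn_trans _ ks).
Qed.

End Chain.

Lemma telescope_from (R : zmodType) (m f : nat) (g : nat -> R) : (f <= m)%N -> g m = 0 ->
  \sum_(j < m) (g j - g j.+1) *+ (f <= j)%N = g f.
Proof.
move=> fm gm; rewrite -(big_mkord xpredT (fun j => (g j - g j.+1) *+ (f <= j)%N)).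
rewrite (big_cat_nat (leq0n f) fm) /= big_nat_cond big1 ?add0r; last first.
  by move=> j /andP [/andP [_ jf] _]; rewrite leqNgt jf.
under eq_big_nat => j /andP [fj _] do rewrite fj mulr1n.
rewrite -[LHS]opprK -sumrN; under eq_bigr => j _ do rewrite opprB.
by rewrite telescope_sumr // gm sub0r opprK.
Qed.

Section SigmaArrangement.
Variables (R : realType) (Vf Vinf : finType) (n : Vf -> nat).
Local Notation V := (Vf + Vinf)%type.
Local Notation pt := (V -> R).

Definition sigma_idx := (Vf + (unit + (Vinf + Vinf * Vinf)))%type.

Definition coord (w v : V) : int := if v == w then 1 else 0.

Definition sigma_lam (k : sigma_idx) : V -> int :=
  match k with
  | inl p => coord (inl p)
  | inr (inl _) => fun v => if v is inl p then (n p)%:Z else 0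
  | inr (inr (inl i)) => coord (inr i)
  | inr (inr (inr (i, j))) => fun v => coord (inr i) v - coord (inr j) v
  end.

Definition sigma_const (k : sigma_idx) : rat := if k is inr (inl _) then -1 else 0.

Local Notation ell0 k u := (ell sigma_lam (fun=> 0) k u).

Lemma iqaff_coord w (u : pt) : iqaff (coord w) 0 u = u w.
Proof.
rewrite /iqaff rmorph0 addr0 (bigD1 w) //= big1 ?addr0 /coord ?eqxx ?mul1r // => v /negPf ->.
by rewrite mul0r.
Qed.

Lemma ell0_sigma_f p (u : pt) : ell0 (inl p) u = u (inl p).
Proof. exact: iqaff_coord. Qed.

Lemma ell0_sigma_sum (u : pt) : ell0 (inr (inl tt)) u = \sum_p (n p)%:R * u (inl p).
Proof.
rewrite /ell /iqaff /= rmorph0 addr0 big_sumType /= [X in _ + X]big1 ?addr0 //.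
by move=> i _; rewrite mul0r.
Qed.

Lemma ell0_sigma_inf i (u : pt) : ell0 (inr (inr (inl i))) u = u (inr i).
Proof. exact: iqaff_coord. Qed.

Lemma ell0_sigma_diff i j (u : pt) : ell0 (inr (inr (inr (i, j)))) u = u (inr i) - u (inr j).
Proof.
rewrite -!(iqaff_coord _ u) /ell /iqaff /= rmorph0 !addr0 -sumrB.
by apply: eq_bigr => v _; rewrite intrB mulrBl.
Qed.

Section SigmaCell.
Variables (A : {set Vf}) (c : seq {set Vinf}).
Local Notation ci := (chain_idx c).

Definition sigma_sign (k : sigma_idx) : option bool :=
  match k with
  | inl p => if p \in A then Some true else None
  | inr (inl _) => None
  | inr (inr (inl i)) => if (ci i < size c)%N then Some true else None
  | inr (inr (inr (i, j))) => if ci i == ci j then None else Some (ci i < ci j)%N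
  end.

Definition sigma_sign_lin (k : sigma_idx) : option bool :=
  if k is inr (inl _) then Some true else sigma_sign k.

Definition sigma_ineqs (u : pt) : Prop :=
  [/\ forall p, if p \in A then 0 <= u (inl p) : Prop else u (inl p) = 0,
      \sum_p (n p)%:R * u (inl p) = 1,
      forall i, if (ci i < size c)%N then 0 <= u (inr i) : Prop else u (inr i) = 0 &
      forall i j, (ci i <= ci j)%N -> u (inr j) <= u (inr i)].

Lemma sign_cell_sigma (u : pt) :
  sign_cell sigma_lam sigma_const sigma_sign u <-> sigma_ineqs u.
Proof.
split=> [h|[hA hsum hinf hdiff]].
  have E k : has_sign (sigma_sign k) (ell0 k u + ratr (sigma_const k)) by rewrite -ell_lin.
  split.
  - move=> p; have /has_signE := E (inl p); rewrite ell0_sigma_f /= rmorph0 addr0.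
    by case: (p \in A).
  - have /has_signE := E (inr (inl tt)); rewrite ell0_sigma_sum /= rmorphN1.
    by move/eqP; rewrite subr_eq0 => /eqP.
  - move=> i; have /has_signE := E (inr (inr (inl i))); rewrite ell0_sigma_inf /= rmorph0 addr0.
    by case: (ci i < size c)%N.
  - move=> i j; rewrite leq_eqVlt => /orP ij.
    have /has_signE := E (inr (inr (inr (i, j)))); rewrite ell0_sigma_diff /= rmorph0 addr0.
    case: ij => [/eqP e|lt]; first by rewrite e eqxx => /eqP; rewrite subr_eq0 => /eqP ->.
    by rewrite (ltn_eqF lt) lt subr_ge0.
case=> [p|[[]|[i|[i j]]]]; apply/has_signE; rewrite ell_lin /=.
- by rewrite ell0_sigma_f rmorph0 addr0; move: (hA p); case: (p \in A).
- by rewrite ell0_sigma_sum hsum rmorphN1 subrr.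
- by rewrite ell0_sigma_inf rmorph0 addr0; move: (hinf i); case: (ci i < size c)%N.
rewrite ell0_sigma_diff rmorph0 addr0; case: ltngtP => h.
- by rewrite subr_ge0 hdiff // ltnW.
- by rewrite subr_le0 hdiff // ltnW.
- by apply/eqP; rewrite subr_eq0 eq_le !hdiff ?h.
Qed.

Lemma sign_cell_sigma_lin :
  sign_cell (R := R) sigma_lam sigma_const sigma_sign `<=`
  sign_cell sigma_lam (fun=> 0) sigma_sign_lin.
Proof.
move=> u hu k; have := hu k; rewrite ell_lin.
case: k => [p|[[]|k]] /=; rewrite ?rmorph0 ?addr0 // rmorphN1.
move/has_sign_None/eqP; rewrite subr_eq0 => /eqP ->.
by apply/has_signE; exact: ler01.
Qed.

Hypotheses (n_gt0 : forall p, (0 < n p)%N) (chain_c : is_chain c).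

Lemma sigma_cell_ineqs (u : pt) : sigma_cell n A c u -> sigma_ineqs u.
Proof.
move=> [lam [mu [lam0 lamA [lam1 mu0] hf hinf]]].
have {}hinf i : u (inr i) = \sum_(j < size c) mu j *+ (ci i <= j)%N.
  by rewrite hinf; apply: eq_bigr => j _; rewrite mem_nth_chain // mulr_natr.
split.
- move=> p; rewrite hf; case: ifP => hp; first by rewrite divr_ge0.
  by rewrite lamA ?hp // mul0r.
- rewrite -[RHS]lam1; apply: eq_bigr => p _.
  by rewrite hf mulrC divfK // pnatr_eq0 -lt0n n_gt0.
- move=> i; rewrite hinf; case: ltnP => hi.
    by apply: sumr_ge0 => j _; rewrite mulrn_wge0.
  by rewrite big1 // => j _; rewrite leqNgt (leq_trans (ltn_ord j) hi) mulr0n.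
- move=> i j hij; rewrite !hinf; apply: ler_sum => k _.
  case: (leqP (ci j) k) => h; first by rewrite (leq_trans hij h).
  by rewrite mulr0n mulrn_wge0.
Qed.

Lemma ineqs_sigma_cell (u : pt) : sigma_ineqs u -> sigma_cell n A c u.
Proof.
move=> [hA hsum hinf hdiff].
have /choice [rep rep_idx] : forall k : 'I_(size c), exists i, ci i = k.
  by move=> k; exact: chain_idx_onto.
(* [g k] is the common value of [u (inr i)] over the [i] with [ci i = k]. *)
pose g k : R := if insub k is Some o then u (inr (rep o)) else 0.
have g_idx i : g (ci i) = u (inr i).
  rewrite /g; case: insubP => [o _ eo|]; last by move: (hinf i) => /[swap] /negPf ->.
  by apply/eqP; rewrite eq_le !hdiff // rep_idx eo.
have g_out k : (size c <= k)%N -> g k = 0 by move=> hk; rewrite /g insubF // ltnNge hk.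
have g_anti j : (j < size c)%N -> g j.+1 <= g j.
  move=> hj; have [r er] := chain_idx_onto chain_c hj; rewrite -er g_idx.
  case: (ltnP (ci r).+1 (size c)) => [/(chain_idx_onto chain_c) [r' er']|hr].
    by rewrite -er' g_idx hdiff // er'.
  by rewrite g_out //; move: (hinf r); rewrite er hj.
have u_ge0 p : 0 <= u (inl p) by move: (hA p); case: ifP => // _ ->.
exists (fun p => (n p)%:R * u (inl p)), (fun j => g j - g j.+1); split.
- by move=> p; rewrite mulr_ge0.
- by move=> p /negPf hp; move: (hA p); rewrite hp => ->; rewrite mulr0.
- by split=> // j; rewrite subr_ge0 g_anti.
- by move=> p; rewrite mulrC mulKf // pnatr_eq0 -lt0n n_gt0.
move=> i; under eq_bigr => j _ do rewrite mem_nth_chain // mulr_natr.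
by rewrite telescope_from ?g_idx //; [exact: chain_idx_le | exact: g_out].
Qed.

Lemma sigma_cell_dbl : @sigma_cell R _ _ n A c =
  sign_cell (dbl_lam sigma_lam) (dbl_const sigma_const) (dbl_sign sigma_sign sigma_sign_lin).
Proof.
rewrite sign_cell_dbl; apply/seteqP; split=> u.
  move/sigma_cell_ineqs/sign_cell_sigma => hu; split=> //; exact: sign_cell_sigma_lin.
by move=> [/sign_cell_sigma hu _]; exact: ineqs_sigma_cell.
Qed.

End SigmaCell.
End SigmaArrangement.

Theorem proposition5p2 (R : realType) (Vf Vinf : finType) (n : Vf -> nat)
    (Sigma : set (set (Vf + Vinf -> R))) :
  (forall p, (0 < n p)%N) ->
  iq_complex Sigma ->
  (forall s, Sigma s -> exists (A : {set Vf}) (c : seq {set Vinf}),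
        is_chain c /\ s = @sigma_cell R Vf Vinf n A c) ->
  exists Sh : set (set (Vf + Vinf -> R)),
    [/\ iq_complex Sh /\ covers Sh, Sigma `<=` Sh,
        iq_fan (rec_fan Sh) /\ covers (rec_fan Sh),
        rec_fan Sigma `<=` rec_fan Sh &
        convex_complex Sh /\ convex_complex (rec_fan Sh)].
Proof.
move=> n_gt0 [_ Sigma_ne _ _] Sigma_cells.
pose lam := dbl_lam (@sigma_lam Vf Vinf n); pose a := dbl_const (@sigma_const Vf Vinf).
exists (@sign_cells R _ _ lam a).
have Sigma_sub : Sigma `<=` sign_cells lam a.
  move=> s hs; have [A [c [chain_c es]]] := Sigma_cells s hs; subst s.
  exists (dbl_sign (sigma_sign A c) (sigma_sign_lin A c)).
  by split; [exact: sigma_cell_dbl | exact: (Sigma_ne _ hs).2].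
have rec_fan_Sh : rec_fan (sign_cells lam a) = @sign_cells R _ _ lam (fun=> 0) :=
  rec_fan_dbl _ _ _.
split.
- by split; [exact: sign_cells_complex | exact: sign_cells_cover].
- exact: Sigma_sub.
- rewrite rec_fan_Sh; split; last exact: sign_cells_cover.
  by split=> [|C [s [-> _]]]; [exact: sign_cells_complex | exact: sign_cell0_iq_cone].
- exact: image_subset.
- by rewrite rec_fan_Sh; split; exact: sign_cells_convex.
Qed.
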